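(* Let $P$ be a domain and $D\ge 2$ an integer, and let $R\subseteq P$. Suppose that initially each pixel of $R$ carries exactly one unit of snow, the pixels of $P\setminus R$ carry no snow, and the snowblower stands on a pixel of $P\setminus R$. Then every sequence of moves in the default model that obeys the capacity constraint and after which no pixel of $P$ carries snow consists of at least $|R|$ moves and of at least $\frac{1}{D}\sum_{q\in R}\mathrm{vdist}(q)$ moves. (Consequently the same bounds hold in the adjustable-throw and fixed-throw models.)
   Context: A pixel is a closed unit square $[i,i+1]\times[j,j+1]$, $i,j\in\mathbb{Z}$; two pixels are adjacent if they share a side. The domain $P$ is a finite set of pixels whose dual graph $G_P$ (vertex per pixel, edges between adjacent pixels) is connected. A boundary side is a side of a pixel of $P$ not shared with another pixel of $P$; a boundary pixel is a pixel of $P$ with a boundary side. For $q\in P$, $\mathrm{vdist}(q)=1+\min_{b}\mathrm{dist}_{G_P}(q,b)$, the minimum over boundary pixels $b$ of $P$. A move: the snowblower goes from its pixel $v$ to an adjacent pixel $u\in P$, and upon entering $u$ all snow on $u$ is thrown onto the pixel adjacent to $u$ in a chosen direction (default model: forward, left, right, or backward onto $v$; adjustable-throw: forward, left, right; fixed-throw: right, all relative to the motion $v\to u$); if that pixel is not in $P$ the snow disappears, otherwise it is added to the snow there. Capacity constraint: at all times every pixel of $P$ carries at most $D$ units of snow. *)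

From mathcomp Require Import all_boot all_order all_algebra.
Set Implicit Arguments. Unset Strict Implicit. Unset Printing Implicit Defensive.
Import Order.TTheory GRing.Theory Num.Theory.

(* A pixel [i,i+1]x[j,j+1] is identified with its lower-left corner (i,j). *)
Definition pixel := (int * int)%type.

Definition adj (p q : pixel) : bool :=
  (absz (p.1 - q.1)%R + absz (p.2 - q.2)%R == 1)%N.

Definition nbrs (p : pixel) : seq pixel :=
  [:: (p.1 + 1, p.2)%R; (p.1 - 1, p.2)%R; (p.1, p.2 + 1)%R; (p.1, p.2 - 1)%R].

(* A domain is given as a duplicate-free list of pixels. *)
Definition gstep (P : seq pixel) (a b : pixel) : bool :=
  [&& a \in P, b \in P & adj a b].

Fixpoint walkb (P : seq pixel) (n : nat) (a b : pixel) : bool :=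
  if n is n'.+1 then has (fun c => gstep P a c && walkb P n' c b) P
  else (a \in P) && (a == b).

Definition connected_domain (P : seq pixel) : Prop :=
  forall a b, a \in P -> b \in P -> exists n, walkb P n a b.

Definition boundary (P : seq pixel) (q : pixel) : bool :=
  (q \in P) && has (fun r => r \notin P) (nbrs q).

(* Graph distance in G_P from q to the nearest boundary pixel: the least n
   such that some boundary pixel is reachable by a walk of n edges.
   (For a finite connected P such an n exists and is < size P, so the
   search range iota 0 (size P) is sufficient.) *)
Definition bdist (P : seq pixel) (q : pixel) : nat :=
  find (fun n => has (fun b => boundary P b && walkb P n q b) P) (iota 0 (size P)).

Definition vdist (P : seq pixel) (q : pixel) : nat := (bdist P q).+1.

Definition snow := pixel -> nat.

(* A move in the default model is a pair (u, w): the snowblower moves from its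
   current pixel v to the adjacent pixel u of P, and the snow on u is thrown
   onto the pixel w adjacent to u (forward, left, right or backward = any of
   the four side-neighbours of u).  If w is not in P the snow disappears. *)
Definition move_ok (P : seq pixel) (v : pixel) (m : pixel * pixel) : bool :=
  [&& m.1 \in P, adj v m.1 & adj m.1 m.2].

Definition throw (P : seq pixel) (s : snow) (m : pixel * pixel) : snow :=
  fun x => if x == m.1 then 0
           else if (x == m.2) && (m.2 \in P) then s x + s m.1 else s x.

Fixpoint valid_run (P : seq pixel) (D : nat) (v : pixel) (s : snow)
    (ms : seq (pixel * pixel)) : Prop :=
  match ms with
  | [::] => True
  | m :: ms' =>
      move_ok P v m /\
      (forall x, x \in P -> throw P s m x <= D) /\
      valid_run P D m.1 (throw P s m) ms'
  end.

Fixpoint final_snow (P : seq pixel) (s : snow) (ms : seq (pixel * pixel)) : snow :=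
  match ms with
  | [::] => s
  | m :: ms' => final_snow P (throw P s m) ms'
  end.

Definition init_snow (R : seq pixel) : snow := fun x => if x \in R then 1 else 0.

From mathcomp Require Import all_boot all_order all_algebra zify.
Import GRing.Theory.

Set Implicit Arguments.
Unset Strict Implicit.

(* Each unit of snow on q must be thrown vdist q times before it leaves P:
   it travels through adjacent pixels, and vdist drops by at most one per
   throw, down to 1 on a boundary pixel, from which it may leave P.  Hence the
   potential Phi(s) = sum_x s(x) vdist(x) drops by at most the amount thrown,
   which is at most D, at each move; it starts at sum_{q in R} vdist(q) and
   ends at 0.  The bound |R| holds because every pixel of R must be entered
   at least once to be cleared. *)

Lemma adj_mem_nbrs (u w : pixel) : adj u w -> w \in nbrs u.
Proof.
case: u w => [a b] [c d]; rewrite /adj /nbrs /= !inE => /eqP H.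
have : ((c = a + 1 /\ d = b) \/ (c = a - 1 /\ d = b) \/
        (c = a /\ d = b + 1) \/ (c = a /\ d = b - 1))%R by lia.
by move=> [[-> ->]|[[-> ->]|[[-> ->]|[-> ->]]]]; rewrite !eqxx ?orbT.
Qed.

Lemma adj_neq (u w : pixel) : adj u w -> u != w.
Proof. by move=> H; apply/eqP=> E; move: H; rewrite E /adj !subrr. Qed.

Lemma sum_seq_pred1 (I : eqType) (r : seq I) (i : I) (c : nat) : uniq r ->
  \sum_(x <- r) (if x == i then c else 0) = if i \in r then c else 0.
Proof.
move=> ur; case: ifP => ir.
  by rewrite (bigD1_seq i) //= eqxx big1 ?addn0 // => x /negbTE ->.
by rewrite big1_seq // => x /= xr; case: eqP xr => // ->; rewrite ir.
Qed.

Lemma sum_seq_mem (I : eqType) (r s : seq I) (F : I -> nat) :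
  uniq r -> uniq s -> {subset s <= r} ->
  \sum_(x <- r) (if x \in s then F x else 0) = \sum_(x <- s) F x.
Proof.
move=> ur us sr; rewrite -big_mkcond -big_filter; apply: perm_big.
apply: uniq_perm; rewrite ?filter_uniq // => x.
by rewrite mem_filter; case xs: (x \in s); rewrite //= sr.
Qed.

Section FindIota.

Variables (p : pred nat) (k : nat).

Lemma find_iota0_le_size : find p (iota 0 k) <= k.
Proof. by rewrite -[X in _ <= X](size_iota 0) find_size. Qed.

Lemma find_iota0_le i : p i -> find p (iota 0 k) <= i.
Proof.
move=> pi; have [ik|] := ltnP i k; last first.
  exact/leq_trans/find_iota0_le_size.
rewrite leqNgt; apply/negP => /(before_find 0).
by rewrite nth_iota // add0n pi.
Qed.

Lemma find_iota0_lt : find p (iota 0 k) < k -> p (find p (iota 0 k)).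
Proof.
move=> lt; have hp : has p (iota 0 k) by rewrite has_find size_iota.
by have := nth_find 0 hp; rewrite nth_iota.
Qed.

End FindIota.

Section BoundaryDistance.

Variable P : seq pixel.

Definition reaches_boundary n q := has (fun b => boundary P b && walkb P n q b) P.

Lemma reaches_boundary_gstep n u w :
  gstep P u w -> reaches_boundary n w -> reaches_boundary n.+1 u.
Proof.
move=> uw /hasP [b bP /andP [bb wb]]; apply/hasP; exists b => //.
by rewrite bb /=; apply/hasP; exists w; rewrite ?uw //; case/and3P: uw.
Qed.

Lemma bdist_gstep u w : gstep P u w -> bdist P u <= (bdist P w).+1.
Proof.
move=> uw; have [lt|ge] := ltnP (bdist P w) (size P).
  apply: find_iota0_le; apply: reaches_boundary_gstep uw _.
  exact: find_iota0_lt lt.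
exact: leq_trans (find_iota0_le_size _ _) (leqW ge).
Qed.

Lemma bdist_boundary q : boundary P q -> bdist P q = 0.
Proof.
move=> bq; apply/eqP; rewrite -leqn0; apply: find_iota0_le.
have qP : q \in P by case/andP: bq.
by apply/hasP; exists q; rewrite // bq /= qP eqxx.
Qed.

Lemma vdist_throw u w : u \in P -> adj u w ->
  vdist P u <= (if w \in P then vdist P w else 0) + 1.
Proof.
move=> uP uw; rewrite /vdist; case: ifP => wP.
  by rewrite addn1 ltnS; apply: bdist_gstep; rewrite /gstep uP wP.
rewrite bdist_boundary // /boundary uP.
by apply/hasP; exists w; rewrite ?wP ?adj_mem_nbrs.
Qed.

End BoundaryDistance.

Definition potential (P : seq pixel) (s : snow) := \sum_(x <- P) s x * vdist P x.

Lemma potential_throw (P : seq pixel) (s : snow) (u w : pixel) :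
  uniq P -> u \in P -> u != w ->
  potential P (throw P s (u, w)) + s u * vdist P u =
  potential P s + (if w \in P then s u * vdist P w else 0).
Proof.
move=> uP uin uw; have := sum_seq_pred1 u (s u * vdist P u) uP.
rewrite uin /potential => <-; rewrite -(sum_seq_pred1 w _ uP) -!big_split /=.
rewrite big_seq_cond [RHS]big_seq_cond.
apply: eq_bigr => x /andP [xP _]; rewrite /throw /=.
case: (eqVneq x u) => [->|_]; first by rewrite (negbTE uw) mul0n addn0.
by case: (eqVneq x w) => [xw|] //=; rewrite -xw xP addn0 mulnDl.
Qed.

Lemma potential_move (P : seq pixel) (D : nat) (v : pixel) (s : snow) m :
  uniq P -> move_ok P v m -> s m.1 <= D ->
  potential P s <= potential P (throw P s m) + D.
Proof.
case: m => u w uP /and3P [/= uin _ uw] /= suD.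
have := potential_throw s uP uin (adj_neq uw).
have := leq_mul (leqnn (s u)) (vdist_throw uin uw).
case: ifP => _; nia.
Qed.

Lemma potential_run (P : seq pixel) (D : nat) : uniq P -> forall ms v s,
  valid_run P D v s ms -> (forall x, x \in P -> s x <= D) ->
  potential P s <= potential P (final_snow P s ms) + D * size ms.
Proof.
move=> uP; elim=> [|m ms IH] v s /=; first by rewrite muln0 addn0.
move=> [mok [cap run]] sD.
have m1P : m.1 \in P by case/and3P: mok.
have := potential_move uP mok (sD _ m1P).
have := IH _ _ run cap.
rewrite mulnS; lia.
Qed.

Lemma final_snow_eq0_entered (P : seq pixel) ms s x :
  0 < s x -> final_snow P s ms x = 0 -> x \in map fst ms.
Proof.
elim: ms s => [|m ms IH] s /= sx fin; first by rewrite fin in sx.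
rewrite in_cons; case E: (x == m.1) => //=.
by apply: (IH (throw P s m)) => //; rewrite /throw E; case: ifP => _; lia.
Qed.

Theorem lemma2 (P R : seq pixel) (D : nat) (v0 : pixel)
    (ms : seq (pixel * pixel)) :
  uniq P -> connected_domain P -> (2 <= D)%N ->
  uniq R -> {subset R <= P} ->
  v0 \in P -> v0 \notin R ->
  valid_run P D v0 (init_snow R) ms ->
  (forall x, x \in P -> final_snow P (init_snow R) ms x = 0) ->
  (size R <= size ms)%N /\ (\sum_(q <- R) vdist P q <= D * size ms)%N.
Proof.
move=> uP _ D2 uR RP _ _ run fin; split.
  rewrite -(size_map fst); apply: uniq_leq_size => // x xR.
  apply: (final_snow_eq0_entered (s := init_snow R)); last exact: fin (RP _ xR).
  by rewrite /init_snow xR.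
have init : potential P (init_snow R) = \sum_(q <- R) vdist P q.
  rewrite /potential -(sum_seq_mem _ uP uR RP); apply: eq_bigr => x _.
  by rewrite /init_snow; case: ifP; rewrite ?mul1n.
have final : potential P (final_snow P (init_snow R) ms) = 0.
  by rewrite /potential big1_seq // => x /= xP; rewrite fin.
rewrite -init -(add0n (D * _)) -final; apply: (potential_run uP run).
by move=> x _; rewrite /init_snow; case: ifP => _; lia.
Qed.
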